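(* Let $\mathbf{E}=(E_1,\dots,E_K)$ be fixed with $\sum_{i=1}^K E_i\le E_{max}$, $0\le E_i< E_i^b+\eta_iP_Bh_i$ for all $i$, and $\sum_{j=1}^K\alpha_jE_j>0$. Then, among all $\boldsymbol{\tau}=(\tau_0,\dots,\tau_K)$ satisfying $\sum_{i=0}^K\tau_i\le 1$, $\tau_i\ge 0$ ($i=0,\dots,K$), and $E_i\le E_i^b+\eta_iP_Bh_i\tau_0$ ($i=1,\dots,K$), the objective $\sum_{i=1}^K R_i(E_i,\tau_i)$ is maximized by $$\tau_0^*=\min\left[\left(\max_i\frac{E_i-E_i^b}{\eta_iP_Bh_i}\right)^{+},\,1\right],\qquad \tau_i^*=\frac{\alpha_iE_i(1-\tau_0^* )}{\sum_{j=1}^K\alpha_jE_j},\quad i=1,\dots,K,$$ where $(x)^+=\max(0,x)$.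
   Context: Fix an integer $K\ge 1$ and positive constants $E_{max}$, $P_B$, and, for $i=1,\dots,K$, $E_i^b\ge 0$, $\eta_i\in(0,1)$, $h_i>0$, $g_i>0$, $\Gamma>0$, $\sigma^2>0$. Let $\alpha_i = g_i/(\Gamma\sigma^2)$. For $E_i\ge 0$, $\tau_i\ge 0$ define $R_i(E_i,\tau_i)=\tau_i\log_2\!\left(1+\alpha_i E_i/\tau_i\right)$ for $\tau_i>0$ and $R_i(E_i,0)=0$. *)

From Stdlib Require Import Reals Lra Lia.
Open Scope R_scope.

Fixpoint sumR (n : nat) (f : nat -> R) : R :=
  match n with
  | O => 0
  | S m => sumR m f + f m
  end.

Fixpoint maxupto (n : nat) (f : nat -> R) : R :=
  match n with
  | O => f O
  | S m => Rmax (maxupto m f) (f (S m))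
  end.

Definition pos_part (x : R) : R := Rmax 0 x.

Definition log2 (x : R) : R := ln x / ln 2.

Definition rate (alpha E tau : R) : R :=
  if Rlt_dec 0 tau then tau * log2 (1 + alpha * E / tau) else 0.

(* The normalised rate [t ln (1 + c/t)] is the perspective of [x ↦ ln (1 + x)], hence jointly
   concave in [(c, t)].  Its tangent plane at the ray [c / t = r] gives, for every feasible
   allocation, [Σ rate_i ≤ A(r) Σ t_i + B(r) Σ c_i] with slope [A(r) ≥ 0], and equality holds for the
   proportional allocation [t_i = c_i / r].  Choosing [r = C / S], with [S = 1 - τ0*] the time
   left once the energy constraints are met by the smallest admissible [τ0 = τ0*], shows that
   the proportional allocation of [S] dominates every feasible allocation, since any feasible
   [τ0] is at least [τ0*] and so leaves at most [S] for the users. *)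

From Stdlib Require Import Reals Lra Lia.
Open Scope R_scope.

Lemma sumR_ext n f g : (forall i, (i < n)%nat -> f i = g i) -> sumR n f = sumR n g.
Proof.
  induction n as [|n IH]; intros Hfg; simpl; [reflexivity|].
  rewrite IH by (intros; apply Hfg; lia). now rewrite (Hfg n) by lia.
Qed.

Lemma sumR_le n f g : (forall i, (i < n)%nat -> f i <= g i) -> sumR n f <= sumR n g.
Proof.
  induction n as [|n IH]; intros Hfg; simpl; [lra|].
  assert (sumR n f <= sumR n g) by (apply IH; intros; apply Hfg; lia).
  specialize (Hfg n ltac:(lia)); lra.
Qed.

Lemma sumR_plus n f g : sumR n (fun i => f i + g i) = sumR n f + sumR n g.
Proof. induction n as [|n IH]; simpl; [ring|]. rewrite IH; ring. Qed.

Lemma sumR_scal n a f : sumR n (fun i => a * f i) = a * sumR n f.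
Proof. induction n as [|n IH]; simpl; [ring|]. rewrite IH; ring. Qed.

Lemma sumR_proportional n (c : nat -> R) S :
  sumR n c <> 0 -> sumR n (fun i => c i * S / sumR n c) = S.
Proof.
  intros HC. rewrite (sumR_ext n _ (fun i => S / sumR n c * c i)) by (intros; field; auto).
  rewrite sumR_scal. field; auto.
Qed.

Lemma maxupto_ge n f i : (i <= n)%nat -> f i <= maxupto n f.
Proof.
  induction n as [|n IH]; simpl; intros Hi.
  - replace i with O by lia; lra.
  - destruct (Nat.eq_dec i (S n)) as [->|Hne]; [apply Rmax_r|].
    eapply Rle_trans; [apply IH; lia|apply Rmax_l].
Qed.

Lemma maxupto_le n f M : (forall i, (i <= n)%nat -> f i <= M) -> maxupto n f <= M.
Proof.
  induction n as [|n IH]; simpl; intros HM; [apply HM; lia|].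
  apply Rmax_lub; [apply IH; intros|]; apply HM; lia.
Qed.

Lemma maxupto_lt n f M : (forall i, (i <= n)%nat -> f i < M) -> maxupto n f < M.
Proof.
  induction n as [|n IH]; simpl; intros HM; [apply HM; lia|].
  apply Rmax_lub_lt; [apply IH; intros|]; apply HM; lia.
Qed.

Lemma Rdiv_le_iff x d t : 0 < d -> (x / d <= t <-> x <= d * t).
Proof.
  intros Hd. replace x with (d * (x / d)) at 2 by (field; lra).
  split; intros H; [apply Rmult_le_compat_l|apply Rmult_le_reg_l with d]; lra.
Qed.

Lemma Rdiv_lt_iff x d t : 0 < d -> (x / d < t <-> x < d * t).
Proof.
  intros Hd. replace x with (d * (x / d)) at 2 by (field; lra).
  split; intros H; [apply Rmult_lt_compat_l|apply Rmult_lt_reg_l with d]; lra.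
Qed.

Lemma ln_le_sub1 x : 0 < x -> ln x <= x - 1.
Proof. intros Hx. pose proof (exp_ineq1_le (ln x)) as H. rewrite exp_ln in H; lra. Qed.

Definition rate_ln (c t : R) : R := if Rlt_dec 0 t then t * ln (1 + c / t) else 0.

Lemma rate_rate_ln a E t : rate a E t = / ln 2 * rate_ln (a * E) t.
Proof. unfold rate, rate_ln, log2. destruct (Rlt_dec 0 t); [unfold Rdiv|]; ring. Qed.

Lemma sumR_rate n (a E t : nat -> R) :
  sumR n (fun i => rate (a i) (E i) (t i))
    = / ln 2 * sumR n (fun i => rate_ln (a i * E i) (t i)).
Proof. rewrite <- sumR_scal. apply sumR_ext. intros; apply rate_rate_ln. Qed.

Definition tangent_slope (r : R) : R := ln (1 + r) - r / (1 + r).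

Lemma tangent_slope_ge0 r : 0 < r -> 0 <= tangent_slope r.
Proof.
  intros Hr. unfold tangent_slope.
  pose proof (ln_le_sub1 (/ (1 + r)) ltac:(apply Rinv_0_lt_compat; lra)) as H.
  rewrite ln_Rinv in H by lra.
  replace (/ (1 + r) - 1) with (- (r / (1 + r))) in H by (field; lra). lra.
Qed.

Lemma rate_ln_le_tangent c t r : 0 <= c -> 0 <= t -> 0 < r ->
  rate_ln c t <= tangent_slope r * t + c / (1 + r).
Proof.
  intros Hc Ht Hr. unfold rate_ln, tangent_slope.
  destruct (Rlt_dec 0 t) as [Htpos|Htpos].
  - set (x := (1 + c / t) / (1 + r)).
    assert (Hx : 0 < x).
    { assert (0 <= c / t) by (apply Rle_mult_inv_pos; lra).
      apply Rdiv_lt_0_compat; lra. }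
    replace (1 + c / t) with (x * (1 + r)) by (unfold x; field; lra).
    rewrite ln_mult by lra.
    assert (t * ln x <= t * (x - 1)) by (apply Rmult_le_compat_l, ln_le_sub1; lra).
    replace (t * (x - 1)) with ((c - t * r) / (1 + r)) in * by (unfold x; field; lra).
    replace (c / (1 + r)) with ((c - t * r) / (1 + r) + t * (r / (1 + r))) by (field; lra).
    lra.
  - assert (0 <= c / (1 + r)) by (apply Rle_mult_inv_pos; lra).
    replace t with 0 by lra. lra.
Qed.

Lemma rate_ln_tangent_eq c r : 0 <= c -> 0 < r ->
  rate_ln c (c / r) = tangent_slope r * (c / r) + c / (1 + r).
Proof.
  intros Hc Hr. unfold rate_ln, tangent_slope.
  destruct (Rlt_dec 0 (c / r)) as [Hpos|Hpos].
  - assert (c <> 0) by (intros ->; unfold Rdiv in Hpos; lra).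
    replace (c / (c / r)) with r by (field; lra). field; lra.
  - assert (c = 0) as ->.
    { destruct Hc as [Hc|]; [|auto]. exfalso; apply Hpos, Rdiv_lt_0_compat; lra. }
    unfold Rdiv; ring.
Qed.

Lemma sum_rate_ln_le_proportional n (c t : nat -> R) (S : R) :
  (forall i, (i < n)%nat -> 0 <= c i) -> 0 < sumR n c -> 0 < S ->
  (forall i, (i < n)%nat -> 0 <= t i) -> sumR n t <= S ->
  sumR n (fun i => rate_ln (c i) (t i))
    <= sumR n (fun i => rate_ln (c i) (c i * S / sumR n c)).
Proof.
  intros Hc HC HS Ht Hbudget. set (C := sumR n c) in *.
  set (r := C / S). assert (Hr : 0 < r) by (apply Rdiv_lt_0_compat; lra).
  set (B := / (1 + r)).
  assert (Hopt : sumR n (fun i => rate_ln (c i) (c i * S / C))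
                 = tangent_slope r * S + B * C).
  { rewrite (sumR_ext n _ (fun i => tangent_slope r * (S / C * c i) + B * c i)).
    - rewrite sumR_plus, !sumR_scal. fold C. field. lra.
    - intros i Hi. replace (c i * S / C) with (c i / r) by (unfold r; field; lra).
      rewrite rate_ln_tangent_eq by auto. unfold B, r. field. lra. }
  rewrite Hopt.
  eapply Rle_trans.
  { apply (sumR_le n _ (fun i => tangent_slope r * t i + B * c i)). intros i Hi.
    replace (B * c i) with (c i / (1 + r)) by (unfold B; field; lra).
    apply rate_ln_le_tangent; auto. }
  rewrite sumR_plus, !sumR_scal. fold C.
  pose proof (tangent_slope_ge0 r Hr).
  assert (tangent_slope r * sumR n t <= tangent_slope r * S)
    by (apply Rmult_le_compat_l; auto).
  lra.
Qed.

(* [τ0*] before truncation at 1: the least [τ0] for which the energy available to every user,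
   [Eb i + d i * τ0], covers its demand [E i]. *)
Definition threshold n (E Eb d : nat -> R) : R :=
  pos_part (maxupto n (fun i => (E i - Eb i) / d i)).

Section Threshold.
Variables (n : nat) (E Eb d : nat -> R).
Hypothesis Hd : forall i, (i <= n)%nat -> 0 < d i.

Lemma threshold_ge0 : 0 <= threshold n E Eb d.
Proof. apply Rmax_l. Qed.

Lemma threshold_lt1 : (forall i, (i <= n)%nat -> E i < Eb i + d i) -> threshold n E Eb d < 1.
Proof.
  intros HE. apply Rmax_lub_lt; [lra|]. apply maxupto_lt. intros i Hi.
  apply Rdiv_lt_iff; [auto|]. specialize (HE i Hi). lra.
Qed.

Lemma energy_le_threshold i : (i <= n)%nat -> E i <= Eb i + d i * threshold n E Eb d.
Proof.
  intros Hi. enough ((E i - Eb i) / d i <= threshold n E Eb d) as H.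
  { apply Rdiv_le_iff in H; auto. lra. }
  eapply Rle_trans; [|apply Rmax_r].
  apply (maxupto_ge n (fun j => (E j - Eb j) / d j)), Hi.
Qed.

Lemma threshold_le t0 : 0 <= t0 ->
  (forall i, (i <= n)%nat -> E i <= Eb i + d i * t0) -> threshold n E Eb d <= t0.
Proof.
  intros Ht0 HE. apply Rmax_lub; [auto|]. apply maxupto_le. intros i Hi.
  apply Rdiv_le_iff; [auto|]. specialize (HE i Hi). lra.
Qed.

End Threshold.

Theorem theorem2
  (K : nat) (Emax PB Gamma sigma2 : R) (Eb eta h g E : nat -> R)
  (HK : (1 <= K)%nat) (HEmax : 0 < Emax) (HPB : 0 < PB)
  (HGamma : 0 < Gamma) (Hsigma2 : 0 < sigma2)
  (HEb : forall i, (i < K)%nat -> 0 <= Eb i)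
  (Heta : forall i, (i < K)%nat -> 0 < eta i < 1)
  (Hh : forall i, (i < K)%nat -> 0 < h i)
  (Hg : forall i, (i < K)%nat -> 0 < g i)
  (HEsum : sumR K E <= Emax)
  (HEi : forall i, (i < K)%nat -> 0 <= E i < Eb i + eta i * PB * h i)
  (HaE : 0 < sumR K (fun j => g j / (Gamma * sigma2) * E j)) :
  let alpha := fun i => g i / (Gamma * sigma2) in
  let tau0s := Rmin (pos_part (maxupto (K - 1)
                   (fun i => (E i - Eb i) / (eta i * PB * h i)))) 1 in
  let taus := fun i => alpha i * E i * (1 - tau0s)
                       / sumR K (fun j => alpha j * E j) in
  let feasible := fun (t0 : R) (t : nat -> R) =>
    t0 + sumR K t <= 1 /\ 0 <= t0 /\
    (forall i, (i < K)%nat -> 0 <= t i) /\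
    (forall i, (i < K)%nat -> E i <= Eb i + eta i * PB * h i * t0) in
  let obj := fun (t : nat -> R) => sumR K (fun i => rate (alpha i) (E i) (t i)) in
  feasible tau0s taus /\
  (forall (t0 : R) (t : nat -> R), feasible t0 t -> obj t <= obj taus).
Proof.
  intros alpha tau0s taus feasible obj.
  set (d := fun i => eta i * PB * h i).
  set (c := fun i => alpha i * E i).
  assert (Hd : forall i, (i <= K - 1)%nat -> 0 < d i).
  { intros i Hi. destruct (Heta i ltac:(lia)). pose proof (Hh i ltac:(lia)).
    unfold d. apply Rmult_lt_0_compat; [apply Rmult_lt_0_compat|]; lra. }
  assert (Hc : forall i, (i < K)%nat -> 0 <= c i).
  { intros i Hi. apply Rmult_le_pos; [|apply HEi, Hi].
    apply Rlt_le, Rdiv_lt_0_compat; [apply Hg, Hi|apply Rmult_lt_0_compat; lra]. }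
  assert (Hlt1 : threshold (K - 1) E Eb d < 1)
    by (apply threshold_lt1; auto; intros i Hi; apply HEi; lia).
  assert (Htau0s : tau0s = threshold (K - 1) E Eb d) by (apply Rmin_left; lra).
  assert (HC : 0 < sumR K c) by exact HaE.
  assert (Hsum : sumR K taus = 1 - tau0s) by (apply (sumR_proportional K c); lra).
  split.
  - repeat split.
    + lra.
    + rewrite Htau0s. apply threshold_ge0.
    + intros i Hi. apply Rle_mult_inv_pos; [apply Rmult_le_pos; [apply Hc, Hi|lra]|exact HC].
    + intros i Hi. rewrite Htau0s. apply (energy_le_threshold (K - 1) E Eb d); auto; lia.
  - intros t0 t (Hbudget & Ht0 & Ht & Henergy).
    assert (tau0s <= t0)
      by (rewrite Htau0s; apply threshold_le; auto; intros i Hi; apply Henergy; lia).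
    unfold obj. rewrite !sumR_rate.
    apply Rmult_le_compat_l.
    + apply Rlt_le, Rinv_0_lt_compat. rewrite <- ln_1. apply ln_increasing; lra.
    + apply sum_rate_ln_le_proportional; auto; lra.
Qed.
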